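(* Let $A,B,C$ be logically independent events. Given $(x,y)\in[0,1]^2$, the assessment $P(C|AB)=x$, $P(B|A)=y$, $P(C|A)=z$ is coherent if and only if \[ xy\le z\le xy+1-y . \] Consequently, if $0\le\alpha_i\le\beta_i\le1$ ($i=1,2$), the set of values $z$ for which there exist $x\in[\alpha_1,\beta_1]$, $y\in[\alpha_2,\beta_2]$ making $(x,y,z)$ a coherent assessment on $(C|AB,B|A,C|A)$ is exactly $[\alpha_3,\beta_3]$ with $\alpha_3=\alpha_1\alpha_2$ and $\beta_3=\beta_1\alpha_2+1-\alpha_2$.
   Context: Events are elements of a Boolean algebra; $AB$ denotes conjunction, $A\vee B$ disjunction, $A^c$ negation. $A,B,C$ are logically independent if all eight conjunctions $A^{*}B^{*}C^{*}$ (each $X^{*}\in\{X,X^c\}$) are possible (nonempty). A conditional event $E|H$ requires $H\neq\emptyset$; conditional probabilities are treated as primitive (no requirement that $P(H)>0$). Coherence (de Finetti): an assessment $(p_1,\dots,p_n)$ on conditional events $E_1|H_1,\dots,E_n|H_n$ is coherent if for every nonempty $J\subseteq\{1,\dots,n\}$ and every real numbers $s_j$ ($j\in J$), the random gain $G=\sum_{j\in J}s_j\,I_{H_j}(I_{E_j}-p_j)$ (with $I$ denoting indicator functions) satisfies $\max G\ge 0$, where the maximum is taken over the possible worlds (atoms) contained in $\bigvee_{j\in J}H_j$. *)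

(* Events are modelled as subsets (boolean predicates) of a
   nonempty-or-not type Omega of possible worlds (a field of sets; by Stone
   every Boolean algebra arises this way). *)
From HB Require Import structures.
From mathcomp Require Import all_boot all_order all_algebra.
From mathcomp Require Import reals.
Set Implicit Arguments. Unset Strict Implicit. Unset Printing Implicit Defensive.
Import Order.TTheory GRing.Theory Num.Theory.
Local Open Scope ring_scope.

Definition event (Omega : Type) := Omega -> bool.

Definition logically_independent (Omega : Type) (A B C : event Omega) : Prop :=
  forall a b c : bool, exists w : Omega, [&& A w == a, B w == b & C w == c].

Definition Ind (R : ringType) (b : bool) : R := if b then 1 else 0.

(* Coherence (de Finetti) of the assessment p on the conditional events
   E_j | H_j, j : 'I_n.  Each H_j must be nonempty (conditional event is
   well-defined); for every nonempty J and real stakes s, the random gain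
   G = sum_{j in J} s_j I_{H_j} (I_{E_j} - p_j) has a nonnegative value at
   some possible world in the disjunction of the H_j, j in J (G takes finitely
   many values on those worlds, so this is "max G >= 0"). *)
Definition coherent (R : realType) (Omega : Type) (n : nat)
    (E H : 'I_n -> event Omega) (p : 'I_n -> R) : Prop :=
  (forall j, exists w, H j w) /\
  forall (J : {set 'I_n}) (s : 'I_n -> R), J != set0 ->
    exists w : Omega, [exists j in J, H j w] &&
      (0 <= \sum_(j in J) s j * Ind R (H j w) * (Ind R (E j w) - p j)).

Definition famE (Omega : Type) (A B C : event Omega) (i : 'I_3) : event Omega :=
  match val i with 0 => C | 1 => B | _ => C end.
Definition famH (Omega : Type) (A B C : event Omega) (i : 'I_3) : event Omega :=
  match val i with 0 => (fun w => A w && B w) | _ => A end.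
Definition famP (R : realType) (x y z : R) (i : 'I_3) : R :=
  match val i with 0 => x | 1 => y | _ => z end.

(* Inside A the assessment extends to a probability on the four constituents,
   P(BC|A) = xy, P(BC^c|A) = (1-x)y, P(B^cC|A) = z-xy, P(B^cC^c|A) = 1-y-z+xy,
   and these weights are nonnegative exactly when xy <= z <= xy+1-y.  Under
   them every random gain has mean zero, hence is nonnegative on some
   constituent.  Conversely, the stakes (1, x, -1) and (-1, 1-x, 1) give gains
   bounded by z - xy and by xy+1-y-z on every constituent, so coherence forces
   both bounds.  For the second part, with y = a2 the bands [x a2, x a2+1-a2]
   cover [a1 a2, b1 a2+1-a2] as x runs over [a1, b1]. *)
From HB Require Import structures.
From mathcomp Require Import all_boot all_order all_algebra.
From mathcomp Require Import reals.
From mathcomp Require Import ring lra.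
Import Order.TTheory GRing.Theory Num.Theory.
Set Implicit Arguments. Unset Strict Implicit. Unset Printing Implicit Defensive.
Local Open Scope ring_scope.

Lemma exists_ge0_of_mean0 (R : realDomainType) (I : finType) (p g : I -> R) :
  (forall i, 0 <= p i) -> \sum_i p i = 1 -> \sum_i p i * g i = 0 ->
  exists i, 0 <= g i.
Proof.
move=> p_ge0 p_sum1 mean0.
have [i gi_ge0 | g_lt0] := pickP (fun i => 0 <= g i); first by exists i.
have pg_eq0 i : - (p i * g i) = 0.
  apply: (psumr_eq0P (P := predT) (F := fun i => - (p i * g i))) => // [j _|].
    by rewrite oppr_ge0 mulr_ge0_le0 // ltW // ltNge g_lt0.
  by rewrite sumrN mean0 oppr0.
suff : \sum_i p i = 0 by rewrite p_sum1 => /eqP; rewrite oner_eq0.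
apply: big1 => i _; have gi_neq0 : g i != 0 by rewrite ltr0_neq0 // ltNge g_lt0.
by move/eqP: (pg_eq0 i); rewrite oppr_eq0 mulf_eq0 (negPf gi_neq0) orbF => /eqP.
Qed.

Section AtomGain.
Variables (R : realFieldType) (x y z : R).

Definition atom_gain (t0 t1 t2 : R) (b c : bool) : R :=
  t0 * Ind R b * (Ind R c - x) + t1 * (Ind R b - y) + t2 * (Ind R c - z).

Definition atom_weight (b c : bool) : R :=
  if b then (if c then x * y else (1 - x) * y)
  else (if c then z - x * y else 1 - y - z + x * y).

Lemma atom_weight_ge0 b c :
  0 <= x <= 1 -> 0 <= y <= 1 -> x * y <= z <= x * y + 1 - y ->
  0 <= atom_weight b c.
Proof.
move=> /andP[x_ge0 x_le1] /andP[y_ge0 y_le1] /andP[z_lb z_ub].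
case: b c => [] [] /=; [exact: mulr_ge0 | | lra | lra].
by rewrite mulr_ge0 // subr_ge0.
Qed.

Lemma sum_atom_weight : \sum_(bc : bool * bool) atom_weight bc.1 bc.2 = 1.
Proof. by rewrite -(pair_bigA _ atom_weight) /= !big_bool /=; ring. Qed.

Lemma mean_atom_gain t0 t1 t2 :
  \sum_(bc : bool * bool) atom_weight bc.1 bc.2 * atom_gain t0 t1 t2 bc.1 bc.2 = 0.
Proof.
rewrite -(pair_bigA _ (fun b c => atom_weight b c * atom_gain t0 t1 t2 b c)).
by rewrite /= !big_bool /= /atom_gain /Ind; ring.
Qed.

Lemma exists_atom_gain_ge0 t0 t1 t2 :
  0 <= x <= 1 -> 0 <= y <= 1 -> x * y <= z <= x * y + 1 - y ->
  exists b c, 0 <= atom_gain t0 t1 t2 b c.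
Proof.
move=> x01 y01 z_band.
have [[b c] gain_ge0] := exists_ge0_of_mean0
  (fun bc => atom_weight_ge0 bc.1 bc.2 x01 y01 z_band)
  sum_atom_weight (mean_atom_gain t0 t1 t2).
by exists b, c.
Qed.

Lemma atom_gain_lower b c :
  atom_gain 1 x (-1) b c = z - x * y - Ind R c * (1 - Ind R b).
Proof. by rewrite /atom_gain; ring. Qed.

Lemma atom_gain_upper b c :
  atom_gain (-1) (1 - x) 1 b c = x * y + 1 - y - z - (1 - Ind R b) * (1 - Ind R c).
Proof. by rewrite /atom_gain; ring. Qed.

Lemma band_of_atom_gain_ge0 :
  (forall t0 t1 t2, exists b c, 0 <= atom_gain t0 t1 t2 b c) ->
  x * y <= z <= x * y + 1 - y.
Proof.
move=> gain_ge0; apply/andP; split.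
- have [b [c]] := gain_ge0 1 x (-1); rewrite atom_gain_lower.
  by case: b c => [] [] /=; lra.
- have [b [c]] := gain_ge0 (-1) (1 - x) 1; rewrite atom_gain_upper.
  by case: b c => [] [] /=; lra.
Qed.

End AtomGain.

Section Family.
Variables (R : realType) (Omega : Type) (A B C : event Omega).

Lemma famH_sub_A j w : famH A B C j w -> A w.
Proof. by case: j => -[|[|j]] //= _ /andP[]. Qed.

Lemma famH_gt0 (i : 'I_3) : (0 < i)%N -> famH A B C i = A.
Proof. by case: i => -[|[|i]]. Qed.

Lemma gain_fam_on_A (x y z : R) (t : 'I_3 -> R) w : A w ->
  \sum_j t j * Ind R (famH A B C j w) * (Ind R (famE A B C j w) - famP x y z j)
  = atom_gain x y z (t ord0) (t (inord 1)) (t (inord 2)) (B w) (C w).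
Proof.
move=> Aw; rewrite !big_ord_recl big_ord0 addr0 addrA.
have -> : lift ord0 ord0 = inord 1 :> 'I_3 by apply: val_inj; rewrite /= inordK.
have -> : lift ord0 (lift ord0 ord0) = inord 2 :> 'I_3.
  by apply: val_inj; rewrite /= inordK.
by rewrite /famH /famE /famP /= !inordK // Aw /= !mulr1.
Qed.

Lemma coherent_atom_gain_ge0 (x y z : R) :
  coherent (famE A B C) (famH A B C) (famP x y z) ->
  forall t0 t1 t2, exists b c, 0 <= atom_gain x y z t0 t1 t2 b c.
Proof.
case=> _ coh t0 t1 t2.
have setT_neq0 : [set: 'I_3] != set0 by apply/set0Pn; exists ord0; rewrite in_setT.
have [w /andP[/existsP[j /andP[_ /famH_sub_A Aw]]]] := coh _ (famP t0 t1 t2) setT_neq0.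
under eq_bigl do rewrite in_setT.
rewrite gain_fam_on_A // /famP /= !inordK //.
by exists (B w), (C w).
Qed.

Lemma coherent_of_band (x y z : R) :
  logically_independent A B C -> 0 <= x <= 1 -> 0 <= y <= 1 ->
  x * y <= z <= x * y + 1 - y ->
  coherent (famE A B C) (famH A B C) (famP x y z).
Proof.
move=> indep x01 y01 z_band; split.
  move=> j; have [w /and3P[/eqP Aw /eqP Bw _]] := indep true true true.
  by exists w; case: j => -[|[|j]] ?; rewrite /famH /= Aw ?Bw.
move=> J s /set0Pn[j0 j0J].
pose t j := if j \in J then s j else 0.
have gainE w : A w ->
    \sum_(j in J)
      s j * Ind R (famH A B C j w) * (Ind R (famE A B C j w) - famP x y z j)
    = atom_gain x y z (t ord0) (t (inord 1)) (t (inord 2)) (B w) (C w).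
  move=> Aw; rewrite big_mkcond -gain_fam_on_A //; apply: eq_bigr => j _.
  by rewrite /t; case: (j \in J); rewrite ?mul0r.
have [i /andP[iJ i_gt0] | only0] := pickP [pred i : 'I_3 | (i \in J) && (0 < i)%N].
  have [b [c gain_ge0]] :=
    exists_atom_gain_ge0 (t ord0) (t (inord 1)) (t (inord 2)) x01 y01 z_band.
  have [w /and3P[/eqP Aw /eqP Bw /eqP Cw]] := indep true b c.
  exists w; rewrite gainE // Bw Cw gain_ge0 andbT.
  by apply/existsP; exists i; rewrite iJ famH_gt0.
(* Only C|AB is staked: the world must lie in AB, and C is chosen by the sign
   of the stake. *)
have t_eq0 (i : 'I_3) : (0 < i)%N -> t i = 0.
  move=> i_gt0; rewrite /t; case: ifP => // iJ.
  by move: (only0 i); rewrite /= iJ i_gt0.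
have [w /and3P[/eqP Aw /eqP Bw /eqP Cw]] := indep true true (0 <= t ord0).
have j0_eq0 : j0 = ord0.
  by apply: val_inj; move: (only0 j0); rewrite /= j0J /=; case: (val j0).
exists w; rewrite gainE // (t_eq0 (inord 1)) ?(t_eq0 (inord 2)) ?inordK //.
apply/andP; split.
  by apply/existsP; exists j0; rewrite j0J j0_eq0 /famH /= Aw Bw.
rewrite /atom_gain Bw Cw /= !mul0r !addr0 mulr1.
by move: x01 => /andP[x_ge0 x_le1]; case: (lerP 0 (t ord0)) => t0_sign /=; nra.
Qed.

Lemma coherent_famE (x y z : R) :
  logically_independent A B C -> 0 <= x <= 1 -> 0 <= y <= 1 ->
  coherent (famE A B C) (famH A B C) (famP x y z) <-> x * y <= z <= x * y + 1 - y.
Proof.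
move=> indep x01 y01; split; last exact: coherent_of_band.
by move/coherent_atom_gain_ge0; apply: band_of_atom_gain_ge0.
Qed.

End Family.

Lemma exists_band_in_box (R : realFieldType) (a1 b1 a2 b2 z : R) :
  0 <= a1 -> a1 <= b1 -> b1 <= 1 -> 0 <= a2 -> a2 <= b2 -> b2 <= 1 ->
  (exists x y, [/\ a1 <= x <= b1, a2 <= y <= b2 & x * y <= z <= x * y + 1 - y])
  <-> a1 * a2 <= z <= b1 * a2 + 1 - a2.
Proof.
move=> a1_ge0 a1_le_b1 b1_le1 a2_ge0 a2_le_b2 b2_le1; split.
  case=> x [y [/andP[a1_le_x x_le_b1] /andP[a2_le_y y_le_b2] /andP[z_lb z_ub]]].
  by apply/andP; split; nra.
move=> /andP[z_lb z_ub].
have [z_le | z_gt] := lerP z (a1 * a2 + 1 - a2).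
  by exists a1, a2; split; apply/andP; split; lra.
have a2_gt0 : 0 < a2 by nra.
pose x := (z - 1 + a2) / a2.
have xa2E : x * a2 = z - 1 + a2 by rewrite divfK // gt_eqF.
by exists x, a2; split; apply/andP; split; nra.
Qed.

Theorem mainTheorem3 (R : realType) (Omega : Type) (A B C : event Omega) :
  logically_independent A B C ->
  (forall x y z : R, 0 <= x <= 1 -> 0 <= y <= 1 ->
     (coherent (famE A B C) (famH A B C) (famP x y z)
      <-> x * y <= z <= x * y + 1 - y)) /\
  (forall a1 b1 a2 b2 : R, 0 <= a1 -> a1 <= b1 -> b1 <= 1 ->
     0 <= a2 -> a2 <= b2 -> b2 <= 1 ->
     forall z : R,
       (exists x y : R, [/\ a1 <= x <= b1, a2 <= y <= b2 &
           coherent (famE A B C) (famH A B C) (famP x y z)])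
       <-> a1 * a2 <= z <= b1 * a2 + 1 - a2).
Proof.
move=> indep; split=> [x y z|a1 b1 a2 b2]; first exact: coherent_famE.
move=> a1_ge0 a1_le_b1 b1_le1 a2_ge0 a2_le_b2 b2_le1 z.
have coherent_boxE (x y : R) : a1 <= x <= b1 -> a2 <= y <= b2 ->
    coherent (famE A B C) (famH A B C) (famP x y z) <-> x * y <= z <= x * y + 1 - y.
  by move=> /andP[? ?] /andP[? ?]; apply: coherent_famE => //; apply/andP; split; lra.
apply: iff_trans (exists_band_in_box z a1_ge0 a1_le_b1 b1_le1 a2_ge0 a2_le_b2 b2_le1).
by split=> -[x [y [x_in y_in /(coherent_boxE x y x_in y_in) ?]]]; exists x, y.
Qed.
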